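(* Let $G=(V,E)$ be a finite undirected graph and let $\rho\in(0,1]$. Then the procedure $\textsc{CliqueAgg}(G,\rho)$ (described in the context) outputs an inclusion-maximal $\rho$-dense aggregator of $G$.
   Context: For a graph with $n'\ge 2$ vertices and $m'$ edges its density is $m'/\binom{n'}{2}$; a graph with one vertex has density $1$. For $v\in V$, $N_G(v)$ is the neighborhood of $v$. A degeneracy ordering of a graph is obtained by repeatedly removing a minimum-degree vertex of the remaining graph (ties broken by vertex id); the order of removal is the ordering. A $\rho$-dense aggregator of $G$ is a collection of nonempty vertex sets $S_1,\dots,S_k\subseteq V$ such that (1) every clique $K$ of $G$ satisfies $K\subseteq S_i$ for some $i$, and (2) every induced subgraph $G[S_i]$ has density at least $\rho$. It is inclusion-maximal if there are no distinct $S_i,S_j$ in it with $S_i\subseteq S_j$. The procedure $\textsc{CliqueAgg}(G,\rho)$ returns $\textsc{Rec}(H=V, C=\emptyset, X=\emptyset)$, where $\textsc{Rec}(H,C,X)$ (with $H,C,X\subseteq V$) does the following. (1) If some $x\in X$ satisfies $H\subseteq N_G(x)$, return $\emptyset$. (2) If $G[C\cup H]$ has density at least $\rho$, return $\{C\cup H\}$. (3) Otherwise set $S:=\emptyset$, $\hat H:=H$, $\hat X:=X$, compute a degeneracy ordering of $G[H]$, and for each $v\in H$ in this order: set $H_v:=N_G(v)\cap\hat H$, $C_v:=C\cup\{v\}$, $X_v:=\hat X\cap N_G(v)$; set $S:=S\cup\textsc{Rec}(H_v,C_v,X_v)$; set $\hat H:=\hat H\setminus\{v\}$ and $\hat X:=\hat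 X\cup\{v\}$; if some $x\in\hat X$ satisfies $\hat H\subseteq N_G(x)$, return $S$; if $G[C\cup\hat H]$ has density at least $\rho$, return $S\cup\{C\cup\hat H\}$. (4) After the loop, return $S$. *)

(* A finite simple graph is a symmetric irreflexive relation
   e : rel T on a finType T; V = [set: T]. Vertex ids = enum_rank. *)
From mathcomp Require Import all_boot all_order all_algebra.
Set Implicit Arguments. Unset Strict Implicit. Unset Printing Implicit Defensive.
Import Order.TTheory GRing.Theory Num.Theory.

Section CliqueAgg.
Variables (T : finType) (e : rel T).

Definition nbhd (v : T) : {set T} := [set u | e v u].

Definition n_edges (S : {set T}) : nat :=
  #|[set A : {set T} | (A \subset S) && (#|A| == 2) &&
       [forall x in A, forall y in A, (x != y) ==> e x y]]|.

(* density: m'/binom(n',2) for n' >= 2; 1 otherwise (one vertex; the empty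
   set never arises for a nonempty graph) *)
Definition density (R : realFieldType) (S : {set T}) : R :=
  if 1 < #|S| then ((n_edges S)%:R / ('C(#|S|, 2))%:R)%R else 1%R.

Definition is_clique (K : {set T}) : Prop :=
  forall x y, x \in K -> y \in K -> x != y -> e x y.

Definition deg_in (W : {set T}) (v : T) : nat := #|W :&: nbhd v|.

Definition min_deg_vertex (W : {set T}) : option T :=
  [pick v in W | [forall u in W, (deg_in W v < deg_in W u) ||
        ((deg_in W v == deg_in W u) && (enum_rank v <= enum_rank u)%N)]].

Fixpoint degen_aux (n : nat) (W : {set T}) : seq T :=
  match n with
  | 0 => [::]
  | n'.+1 => match min_deg_vertex W with
             | Some v => v :: degen_aux n' (W :\ v)
             | None => [::]
             end
  end.

Definition degeneracy_ordering (W : {set T}) : seq T := degen_aux #|W| W.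

Variables (R : realFieldType) (rho : R).

Definition dense (S : {set T}) : bool := (rho <= density R S)%R.

Definition covered (H X : {set T}) : bool := [exists x in X, H \subset nbhd x].

(* Rec(H, C, X), with a fuel argument; fuel > #|H| is maintained along
   the recursion since |H_v| < |H|, so the fuel-0 case is never reached
   when started with fuel #|T|.+1. *)
Fixpoint Rec (fuel : nat) (H C X : {set T}) : {set {set T}} :=
  match fuel with
  | 0 => set0
  | fuel'.+1 =>
    if covered H X then set0
    else if dense (C :|: H) then [set C :|: H]
    else
      let fix loop (s : seq T) (S : {set {set T}}) (Hh Xh : {set T})
          : {set {set T}} :=
        match s with
        | [::] => S
        | v :: s' =>
          let S' := S :|: Rec fuel' (nbhd v :&: Hh) (v |: C) (Xh :&: nbhd v) in
          let Hh' := Hh :\ v in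
          let Xh' := v |: Xh in
          if covered Hh' Xh' then S'
          else if dense (C :|: Hh') then S' :|: [set C :|: Hh']
          else loop s' S' Hh' Xh'
        end
      in loop (degeneracy_ordering H) set0 H X
  end.

Definition CliqueAgg : {set {set T}} := Rec #|T|.+1 [set: T] set0 set0.

Definition dense_aggregator (A : {set {set T}}) : Prop :=
  [/\ (forall S, S \in A -> S != set0),
      (forall K, is_clique K -> exists2 S, S \in A & K \subset S)
    & (forall S, S \in A -> (rho <= density R S)%R)].

Definition inclusion_maximal (A : {set {set T}}) : Prop :=
  forall S1 S2, S1 \in A -> S2 \in A -> S1 != S2 -> ~~ (S1 \subset S2).

End CliqueAgg.

(* Call Rec(H, C, X) well-posed when every vertex of C is adjacent to every
   vertex of H ([joined C H]); the branch at v recurses on (N(v) ∩ H, C + v),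
   so this is preserved.

   Coverage: in a well-posed call, a clique K with C ⊆ K ⊆ C ∪ H either lies
   in an output set or has K \ C ⊆ N(x) for some x ∈ X ([reported]); at the
   top X = ∅.  We may enlarge K to a maximal clique inside C ∪ H.  The branch
   of the first vertex of K \ C in the loop hands K to a recursive call, and
   the only other way out, a vertex of H adjacent to all of K, contradicts
   maximality.

   Maximality: every output S of a well-posed call is dense, nonempty, lies
   between C and C ∪ H, and S \ C ⊄ N(x) for all x ∈ X ([admissible]).
   A set output in the branch of v contains v and lies in {v} ∪ C ∪ N(v)
   ([has_pivot]).  Later sets avoid v, which has moved from H to X; and a
   later set S' inside an earlier such S would put v into the X of the call
   producing S', with S' minus that call's C inside N(v).  The set C ∪ Ĥ
   added when the loop stops is handled in the same way, by the failed
   coverage test. *)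

From mathcomp Require Import all_boot all_order all_algebra.
Import Order.TTheory GRing.Theory Num.Theory.
Set Implicit Arguments. Unset Strict Implicit. Unset Printing Implicit Defensive.

Section CliqueAggCorrect.
Variables (T : finType) (e : rel T) (R : realFieldType) (rho : R).
Hypotheses (e_sym : symmetric e) (e_irr : irreflexive e).

Lemma min_deg_vertex_some (W : {set T}) :
  W != set0 -> exists2 v, min_deg_vertex e W = Some v & v \in W.
Proof.
case/set0Pn=> w wW; rewrite /min_deg_vertex.
case: pickP => [v /andP[vW _] | no_min]; first by exists v.
have [v0 v0W v0_min] := arg_minnP (deg_in e W) wW.
pose W0 := [pred u | (u \in W) && (deg_in e W u == deg_in e W v0)].
have v0W0 : W0 v0 by apply/andP.
have [v /andP[vW /eqP dv] v_min] := arg_minnP (fun u => val (enum_rank u)) v0W0.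
move/negbT: (no_min v); rewrite vW /= => /forallPn[u]; rewrite negb_imply.
case/andP=> uW; rewrite dv; have := v0_min u uW.
rewrite leq_eqVlt => /orP[/eqP du | -> //].
by rewrite -du eqxx v_min ?orbT // /W0 /= uW du eqxx.
Qed.

Lemma degen_aux_enum n (W : {set T}) :
  #|W| = n -> uniq (degen_aux e n W) /\ degen_aux e n W =i W.
Proof.
elim: n W => [|n IHn] W cardW /=.
  by move/eqP: cardW; rewrite cards_eq0 => /eqP->; split=> // x; rewrite inE.
have [|v -> vW] := @min_deg_vertex_some W; first by rewrite -card_gt0 cardW.
have [s_uniq s_W] : uniq (degen_aux e n (W :\ v)) /\ degen_aux e n (W :\ v) =i W :\ v.
  by apply: IHn; move: cardW; rewrite (cardsD1 v) vW => -[].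
split; first by rewrite /= s_uniq s_W setD11.
by move=> x; rewrite inE s_W !inE; case: eqP => [->|] /=; rewrite ?vW.
Qed.

Lemma degeneracy_ordering_enum (W : {set T}) :
  uniq (degeneracy_ordering e W) /\ degeneracy_ordering e W =i W.
Proof. exact: degen_aux_enum. Qed.

Definition cliqueb (K : {set T}) := [forall x in K, forall y in K, (x != y) ==> e x y].

Lemma cliqueP (K : {set T}) : reflect (is_clique e K) (cliqueb K).
Proof.
apply: (iffP forall_inP) => [cK x y xK yK xy | cK x xK].
  by move/forall_inP/(_ y yK)/implyP: (cK x xK); apply.
by apply/forall_inP=> y yK; apply/implyP; apply: cK.
Qed.

Lemma n_edges_clique (K : {set T}) : is_clique e K -> n_edges e K = 'C(#|K|, 2).
Proof.
move=> cK; rewrite /n_edges -cards_draws; apply: eq_card => A; rewrite !inE.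
case sAK: (A \subset K) => //=; rewrite andb_idr // => _.
by apply/cliqueP=> x y xA yA; apply: cK; apply: (subsetP sAK).
Qed.

Lemma dense_clique (K : {set T}) : (rho <= 1)%R -> is_clique e K -> dense e rho K.
Proof.
move=> rho_le1 cK; rewrite /dense /density; case: ifP => // K_gt1.
by rewrite n_edges_clique // divff // pnatr_eq0 -lt0n bin_gt0.
Qed.

(* The loop of step (3), copied verbatim from [Rec] so that [RecE] holds by
   conversion. *)
Definition rec_loop (f : {set T} -> {set T} -> {set T} -> {set {set T}}) (C : {set T}) :=
  fix loop (s : seq T) (S : {set {set T}}) (Hh Xh : {set T}) : {set {set T}} :=
  match s with
  | [::] => S
  | v :: s' =>
    let S' := S :|: f (nbhd e v :&: Hh) (v |: C) (Xh :&: nbhd e v) in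
    let Hh' := Hh :\ v in
    let Xh' := v |: Xh in
    if covered e Hh' Xh' then S'
    else if dense e rho (C :|: Hh') then S' :|: [set C :|: Hh']
    else loop s' S' Hh' Xh'
  end.

Lemma RecE fuel (H C X : {set T}) : Rec e rho fuel.+1 H C X =
  if covered e H X then set0 else if dense e rho (C :|: H) then [set C :|: H]
  else rec_loop (Rec e rho fuel) C (degeneracy_ordering e H) set0 H X.
Proof. by []. Qed.

Lemma rec_loop_subset f C s (S : {set {set T}}) (Hh Xh : {set T}) :
  S \subset rec_loop f C s S Hh Xh.
Proof.
elim: s S Hh Xh => [|v s IHs] S Hh Xh /=; first exact: subxx.
apply: subset_trans (subsetUl S _) _.
by case: ifP => _; [exact: subxx | case: ifP => _; [exact: subsetUl | exact: IHs]].
Qed.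

Lemma rec_loop_cons_subset f C v s (S : {set {set T}}) (Hh Xh : {set T}) :
  S :|: f (nbhd e v :&: Hh) (v |: C) (Xh :&: nbhd e v) \subset rec_loop f C (v :: s) S Hh Xh.
Proof.
rewrite /=; case: ifP => _; first exact: subxx.
by case: ifP => _; [exact: subsetUl | exact: rec_loop_subset].
Qed.

Definition joined (C H : {set T}) := {in C & H, forall c h, e c h}.

Lemma joined_notin (C H : {set T}) h : joined C H -> h \in H -> h \notin C.
Proof. by move=> jCH hH; apply/negP=> hC; have := jCH h h hC hH; rewrite e_irr. Qed.

Lemma joined_branch (C H Hh : {set T}) v :
  joined C H -> Hh \subset H -> joined (v |: C) (nbhd e v :&: Hh).
Proof.
move=> jCH sHh c h; rewrite !inE => /predU1P[-> | cC] /andP[vh hHh] //.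
exact: jCH _ _ cC (subsetP sHh _ hHh).
Qed.

Lemma card_nbhdI_lt (H Hh : {set T}) v :
  v \in H -> Hh \subset H -> #|nbhd e v :&: Hh| < #|H|.
Proof.
move=> vH sHh; rewrite (cardsD1 v H) vH ltnS; apply: subset_leq_card.
apply/subsetP=> x; rewrite !inE => /andP[vx xHh]; rewrite (subsetP sHh) // andbT.
by apply: contraTneq vx => ->; rewrite e_irr.
Qed.

Definition reported (A : {set {set T}}) (C X K : {set T}) :=
  (exists2 S, S \in A & K \subset S) \/ (exists2 x, x \in X & K :\: C \subset nbhd e x).

Lemma reported_sub (A A' : {set {set T}}) (C X X' K : {set T}) :
  A \subset A' -> X \subset X' -> reported A C X K -> reported A' C X' K.
Proof.
move=> sA sX [[S SA KS] | [x xX Kx]]; [left; exists S | right; exists x] => //.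
  exact: subsetP sA _ SA.
exact: subsetP sX _ xX.
Qed.

Lemma reported_subset (A : {set {set T}}) (C X K K' : {set T}) :
  K \subset K' -> reported A C X K' -> reported A C X K.
Proof.
move=> sK [[S SA KS] | [x xX Kx]]; [left; exists S | right; exists x] => //.
  exact: subset_trans KS.
exact: subset_trans (setSD _ sK) Kx.
Qed.

Lemma reported_branch (A : {set {set T}}) (C X K : {set T}) v :
  v \in K -> reported A (v |: C) (X :&: nbhd e v) K -> reported A C X K.
Proof.
move=> vK [KA | [x /setIP[xX xv] Kx]]; [by left | right; exists x => //].
apply/subsetP=> k /setDP[kK kC]; case: (eqVneq k v) => [-> | kv].
  by rewrite inE e_sym; rewrite inE in xv.
by apply: (subsetP Kx); rewrite !inE (negbTE kv) (negbTE kC) kK.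
Qed.

Section Coverage.
Variable fuel : nat.
Hypothesis Rec_reports_fuel : forall H C X K : {set T},
  #|H| < fuel -> joined C H -> is_clique e K -> C \subset K -> K \subset C :|: H ->
  reported (Rec e rho fuel H C X) C X K.
Variables (H C K : {set T}).
Hypotheses (H_le : #|H| <= fuel) (jCH : joined C H) (cK : is_clique e K)
  (sCK : C \subset K).

Lemma rec_loop_reports s S (Hh Xh : {set T}) : H != set0 ->
  {subset s <= H} -> Hh \subset H -> K \subset C :|: Hh -> {subset K :\: C <= s} ->
  reported (rec_loop (Rec e rho fuel) C s S Hh Xh) C (Xh :|: H) K.
Proof.
move=> H_n0; elim: s S Hh Xh => [|v s IHs] S Hh Xh /= sH sHh sKCH sKs.
  have [h hH] := set0Pn _ H_n0; right; exists h; first by rewrite inE hH orbT.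
  by apply/subsetP=> k /sKs.
have vH : v \in H by apply: sH; exact: mem_head.
set F := Rec e rho fuel _ _ _.
case vK: (v \in K).
  have : reported F C Xh K.
    apply: (reported_branch vK); apply: Rec_reports_fuel => //.
    - exact: leq_trans (card_nbhdI_lt vH sHh) H_le.
    - exact: joined_branch jCH sHh.
    - by rewrite subUset sub1set vK.
    apply/subsetP=> k kK; rewrite !inE; case: (eqVneq k v) => //= kv.
    have := subsetP sKCH k kK; rewrite inE => /orP[-> // | kHh].
    by rewrite kHh cK ?orbT // eq_sym.
  apply: reported_sub; last exact: subsetUl.
  exact: subset_trans (subsetUr S F) (rec_loop_cons_subset _ _ _ _ _ _ _).
have sKCH' : K \subset C :|: Hh :\ v.
  apply/subsetP=> k kK; move: (subsetP sKCH k kK); rewrite !inE.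
  by case: (eqVneq k v) => [kv | _] //; rewrite -kv kK in vK.
case: ifP => [/existsP[x /andP[xX Hx]] | _].
  right; exists x; first by move: xX; rewrite !inE => /predU1P[-> | ->]; rewrite ?vH ?orbT.
  by apply: subset_trans Hx; rewrite subDset.
case: ifP => _; first by left; exists (C :|: Hh :\ v); rewrite // !inE eqxx orbT.
apply: reported_sub (IHs _ _ _ _ _ _ _) => //.
- by apply/subsetP=> x; rewrite !inE => /orP[/orP[/eqP-> | ->] | ->]; rewrite ?vH ?orbT.
- by move=> x xs; apply: sH; rewrite inE xs orbT.
- exact: subset_trans (subsetDl _ _) sHh.
- move=> k kKC; have := sKs k kKC; rewrite inE => /predU1P[kv | //].
  by move: kKC; rewrite inE kv vK andbF.
Qed.

Lemma Rec_reports_maximal X : (rho <= 1)%R -> K \subset C :|: H ->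
  (forall y, y \in H :\: K -> ~~ (K \subset nbhd e y)) ->
  reported (Rec e rho fuel.+1 H C X) C X K.
Proof.
move=> rho_le1 sKCH maxK; rewrite RecE.
case: ifP => [/existsP[x /andP[xX Hx]] | _].
  by right; exists x => //; apply: subset_trans Hx; rewrite subDset.
case: ifP => [_ | not_dense]; first by left; exists (C :|: H); rewrite ?inE.
have H_n0 : H != set0.
  apply: contraFneq not_dense => H0; rewrite H0 setU0 in sKCH *.
  have -> : C = K by apply/eqP; rewrite eqEsubset sCK.
  exact: dense_clique.
have [_ s_H] := degeneracy_ordering_enum H.
have := @rec_loop_reports (degeneracy_ordering e H) set0 H X H_n0 _ (subxx H) sKCH.
case.
- by move=> x; rewrite s_H.
- by move=> k /setDP[kK kC]; rewrite s_H; move: (subsetP sKCH k kK); rewrite inE (negbTE kC).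
- by left.
move=> [x /setUP[xX | xH] Kx]; first by right; exists x.
have xC := joined_notin jCH xH.
have xK : x \notin K.
  by apply/negP=> xK; move: (subsetP Kx x); rewrite !inE xK xC e_irr => /(_ isT).
have := maxK x; rewrite inE xK xH => /(_ isT)/negP; case.
apply/subsetP=> k kK; rewrite inE; case: (boolP (k \in C)) => kC.
  by rewrite e_sym; exact: jCH.
by have := subsetP Kx k; rewrite !inE kC kK; apply.
Qed.

End Coverage.

Lemma Rec_reports fuel (H C X K : {set T}) : (rho <= 1)%R ->
  #|H| < fuel -> joined C H -> is_clique e K -> C \subset K -> K \subset C :|: H ->
  reported (Rec e rho fuel H C X) C X K.
Proof.
move=> rho_le1; elim: fuel H C X K => // fuel IHfuel H C X K H_lt jCH cK sCK sKCH.
pose P := [pred K' : {set T} | cliqueb K' && (K' \subset C :|: H)].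
have /maxset_exists[K' maxK' sKK'] : P K by rewrite /= sKCH andbT; apply/cliqueP.
have /maxsetP[/andP[/cliqueP cK' sK'CH] maxP] := maxK'.
apply: (reported_subset sKK').
apply: Rec_reports_maximal => //; first exact: subset_trans sKK'.
move=> y /setDP[yH yK']; apply/negP => K'y.
suff: y |: K' = K' by move/setP/(_ y); rewrite setU11 (negbTE yK').
apply: maxP (subsetUr _ _); rewrite /= subUset sub1set inE yH orbT sK'CH !andbT.
apply/cliqueP=> a b; rewrite !inE => /predU1P[-> | aK] /predU1P[-> | bK] ab.
- by rewrite eqxx in ab.
- by have := subsetP K'y b bK; rewrite inE.
- by have := subsetP K'y a aK; rewrite inE e_sym.
- exact: cK'.
Qed.

Definition admissible (C H X S : {set T}) :=
  [/\ C \subset S, S \subset C :|: H, dense e rho S, S != set0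
    & {in X, forall x, ~~ (S :\: C \subset nbhd e x)}].

Definition sound (C H X : {set T}) (A : {set {set T}}) :=
  {in A, forall S, admissible C H X S} /\ inclusion_maximal A.

Lemma sound0 (C H X : {set T}) : sound C H X set0.
Proof. by split=> [S | S1 S2]; rewrite inE. Qed.

Lemma sound1 (C H X S : {set T}) : admissible C H X S -> sound C H X [set S].
Proof. by move=> admS; split=> [S' /set1P-> | S1 S2 /set1P-> /set1P->]; rewrite ?eqxx. Qed.

Lemma soundU (C H X : {set T}) (A B : {set {set T}}) :
  sound C H X A -> sound C H X B ->
  {in A & B, forall a b : {set T}, ~~ (a \subset b) && ~~ (b \subset a)} ->
  sound C H X (A :|: B).
Proof.
move=> [admA maxA] [admB maxB] incAB; split=> [S | S1 S2].
  by rewrite inE => /orP[/admA | /admB].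
rewrite !inE => /orP[S1A | S1B] /orP[S2A | S2B] ne.
- exact: maxA.
- by case/andP: (incAB _ _ S1A S2B).
- by case/andP: (incAB _ _ S2A S1B).
- exact: maxB.
Qed.

Definition has_pivot (Xh Hh C S : {set T}) := exists w,
  [/\ w \in Xh, w \in S, w \notin C, w \notin Hh & S \subset w |: (C :|: nbhd e w)].

Lemma has_pivot_step (Xh Hh C S : {set T}) v :
  has_pivot Xh Hh C S -> has_pivot (v |: Xh) (Hh :\ v) C S.
Proof.
case=> w [wX wS wC wHh Sw]; exists w; split=> //; first by rewrite !inE wX orbT.
by rewrite !inE (negbTE wHh) andbF.
Qed.

Section Soundness.
Variables (H C X : {set T}).
Hypothesis jCH : joined C H.

Lemma admissible_union (Hh Xh : {set T}) :
  Hh \subset H -> X \subset Xh -> ~~ covered e Hh Xh -> dense e rho (C :|: Hh) ->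
  C :|: Hh != set0 -> admissible C H X (C :|: Hh).
Proof.
move=> sHh sX ncov dn n0; split=> //; [exact: subsetUl | exact: setUS |].
move=> x xX; apply: contra ncov => Hx; apply/existsP; exists x; rewrite (subsetP sX) //=.
apply: subset_trans Hx; apply/subsetP=> y yHh; rewrite !inE yHh orbT andbT.
exact: joined_notin jCH (subsetP sHh _ yHh).
Qed.

Lemma admissible_branch v (Hh Xh S : {set T}) :
  v \in H -> Hh \subset H -> X \subset Xh ->
  admissible (v |: C) (nbhd e v :&: Hh) (Xh :&: nbhd e v) S -> admissible C H X S.
Proof.
move=> vH sHh sX [sCS sSCH dS nS nX]; split=> //.
- exact: subset_trans (subsetUr _ _) sCS.
- apply: subset_trans sSCH _; apply/subsetP=> y; rewrite !inE.
  by case/orP=> [/orP[/eqP-> | ->] | /andP[_ /(subsetP sHh)->]]; rewrite ?vH ?orbT.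
move=> x xX; apply/negP=> Sx.
have vS : v \in S :\: C by rewrite inE (joined_notin jCH vH) (subsetP sCS) // setU11.
have xXv : x \in Xh :&: nbhd e v.
  by rewrite !inE (subsetP sX _ xX) /= e_sym; move: (subsetP Sx v vS); rewrite inE.
by move/negP: (nX x xXv); apply; apply: subset_trans Sx; exact: setDS (subsetUr _ _).
Qed.

Lemma has_pivot_branch v (Hh Xh X' S : {set T}) :
  v \in H -> admissible (v |: C) (nbhd e v :&: Hh) X' S ->
  has_pivot (v |: Xh) (Hh :\ v) C S.
Proof.
move=> vH [sCS sSCH _ _ _]; exists v; split.
- exact: setU11.
- exact: subsetP sCS _ (setU11 _ _).
- exact: joined_notin jCH vH.
- by rewrite setD11.
apply: subset_trans sSCH _; apply/subsetP=> y; rewrite !inE.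
by case/orP=> [/orP[-> | ->] | /andP[-> _]]; rewrite ?orbT.
Qed.

Lemma pivot_incomparable v (Hh Xh S1 S2 : {set T}) :
  has_pivot Xh Hh C S1 -> v \in Hh -> v \notin C ->
  admissible (v |: C) (nbhd e v :&: Hh) (Xh :&: nbhd e v) S2 ->
  ~~ (S1 \subset S2) && ~~ (S2 \subset S1).
Proof.
case=> w [wX wS1 wC wHh S1w] vHh vC [sCS2 sS2 _ _ nX].
have wv : w != v by apply: contraNneq wHh => ->.
apply/andP; split; apply/negP=> sub.
  move: (subsetP sS2 w (subsetP sub w wS1)).
  by rewrite !inE (negbTE wv) (negbTE wC) (negbTE wHh) andbF.
have vS2 : v \in S2 by apply: (subsetP sCS2); exact: setU11.
have wXv : w \in Xh :&: nbhd e v.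
  move: (subsetP S1w v (subsetP sub v vS2)).
  by rewrite !inE eq_sym (negbTE wv) (negbTE vC) wX e_sym.
move/negP: (nX w wXv); apply; apply/subsetP=> x.
rewrite !inE negb_or => /andP[/andP[xv xC] xS2].
have := subsetP sS2 x xS2; rewrite !inE (negbTE xv) (negbTE xC) /= => /andP[_ xHh].
have := subsetP S1w x (subsetP sub x xS2); rewrite !inE (negbTE xC) /=.
by case/orP=> [/eqP xw | //]; rewrite -xw xHh in wHh.
Qed.

Lemma pivot_incomparable_union (Hh Xh S : {set T}) :
  has_pivot Xh Hh C S -> Hh \subset H -> ~~ covered e Hh Xh ->
  ~~ (S \subset C :|: Hh) && ~~ (C :|: Hh \subset S).
Proof.
case=> w [wX wS wC wHh Sw] sHh ncov; apply/andP; split; apply/negP=> sub.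
  by move: (subsetP sub w wS); rewrite inE (negbTE wC) (negbTE wHh).
move/negP: ncov; apply; apply/existsP; exists w; rewrite wX /=.
apply/subsetP=> y yHh.
have yC := joined_notin jCH (subsetP sHh _ yHh).
have yw : y != w by apply: contraNneq wHh => <-.
have yCH : y \in C :|: Hh by rewrite inE yHh orbT.
by move: (subsetP Sw y (subsetP sub y yCH)); rewrite !inE (negbTE yw) (negbTE yC).
Qed.

Variable fuel : nat.
Hypothesis Rec_sound_fuel : forall H' C' X' : {set T}, joined C' H' -> C' :|: H' != set0 ->
  sound C' H' X' (Rec e rho fuel H' C' X').

Lemma rec_loop_step_sound v (Hh Xh : {set T}) S :
  v \in Hh -> Hh \subset H -> X \subset Xh ->
  sound C H X S -> {in S, forall S0, has_pivot Xh Hh C S0} ->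
  let S' := S :|: Rec e rho fuel (nbhd e v :&: Hh) (v |: C) (Xh :&: nbhd e v) in
  sound C H X S' /\ {in S', forall S0, has_pivot (v |: Xh) (Hh :\ v) C S0}.
Proof.
move=> vHh sHh sX soundS pivS S'.
have vH := subsetP sHh v vHh.
have [admF maxF] : sound (v |: C) (nbhd e v :&: Hh) (Xh :&: nbhd e v)
    (Rec e rho fuel (nbhd e v :&: Hh) (v |: C) (Xh :&: nbhd e v)).
  apply: Rec_sound_fuel; first exact: joined_branch jCH sHh.
  by apply/set0Pn; exists v; rewrite !inE eqxx.
split.
  apply: soundU => //; first by split=> // S0 /admF; exact: admissible_branch vH sHh sX.
  move=> S1 S2 /pivS piv /admF; exact: pivot_incomparable piv vHh (joined_notin jCH vH).
move=> S0; rewrite inE => /orP[/pivS/has_pivot_step // | /admF]; exact: has_pivot_branch vH.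
Qed.

Lemma rec_loop_sound s S (Hh Xh : {set T}) :
  uniq s -> {subset s <= Hh} -> Hh \subset H -> X \subset Xh ->
  sound C H X S -> {in S, forall S0, has_pivot Xh Hh C S0} ->
  sound C H X (rec_loop (Rec e rho fuel) C s S Hh Xh).
Proof.
elim: s S Hh Xh => [|v s IHs] S Hh Xh /=; first by move=> _ _ _ _.
case/andP=> vs s_uniq sHh' sHh sX soundS pivS.
have vHh : v \in Hh by apply: sHh'; exact: mem_head.
have [soundS' pivS'] := rec_loop_step_sound vHh sHh sX soundS pivS.
have sHhv : Hh :\ v \subset H by exact: subset_trans (subsetDl _ _) sHh.
case: ifP => // ncov; case: ifP => dn.
  apply: soundU => //.
    apply: sound1; apply: admissible_union (negbT ncov) dn _ => //.
      exact: subset_trans sX (subsetUr _ _).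
    apply: contraFneq ncov => /eqP; rewrite setU_eq0 => /andP[_ /eqP->].
    by apply/existsP; exists v; rewrite setU11 sub0set.
  move=> S1 S2 /pivS' piv /set1P->; exact: pivot_incomparable_union piv sHhv (negbT ncov).
apply: IHs => //; last exact: subset_trans sX (subsetUr _ _).
move=> x xs; rewrite !inE sHh' ?inE ?xs ?orbT // andbT.
by apply: contraNneq vs => <-.
Qed.

End Soundness.

Lemma Rec_sound fuel (H C X : {set T}) :
  joined C H -> C :|: H != set0 -> sound C H X (Rec e rho fuel H C X).
Proof.
elim: fuel H C X => [|fuel IHfuel] H C X jCH n0; first exact: sound0.
rewrite RecE; case: ifP => [_ | ncov]; first exact: sound0.
case: ifP => dn; first by apply: sound1; apply: admissible_union (negbT ncov) dn n0.
have [s_uniq s_H] := degeneracy_ordering_enum H.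
apply: rec_loop_sound => //.
- by move=> x; rewrite s_H.
- exact: sound0.
- by move=> S; rewrite inE.
Qed.

End CliqueAggCorrect.

Theorem theorem3p2 (T : finType) (e : rel T) (R : realFieldType) (rho : R) :
  symmetric e -> irreflexive e -> (0 < #|T|)%N ->
  (0 < rho)%R -> (rho <= 1)%R ->
  dense_aggregator e rho (CliqueAgg e rho) /\
  inclusion_maximal (CliqueAgg e rho).
Proof.
move=> e_sym e_irr T_gt0 _ rho_le1.
have j0 : joined e set0 [set: T] by move=> c; rewrite inE.
have n0 : set0 :|: [set: T] != set0 by rewrite set0U -card_gt0 cardsT.
have [admA maxA] := Rec_sound rho e_sym e_irr #|T|.+1 set0 j0 n0.
split=> //; split=> [S /admA[] // | K cK | S /admA[] //].
have : reported e (Rec e rho #|T|.+1 [set: T] set0 set0) set0 set0 K.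
  by apply: Rec_reports => //; rewrite ?cardsT ?sub0set ?set0U ?subsetT.
by case=> [[S SA KS] | [x]]; [exists S | rewrite inE].
Qed.
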